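(* Let $d=2$, let $M\ge1$ be a real number, let $\alpha,\lambda\in\overline{\mathbb Q}$, and let $|\cdot|_v$ be an absolute value on $\overline{\mathbb Q}$. If $|\alpha|_v\ge\frac{1}{M\cdot|\lambda|_v}\ge2M$, then for all integers $0\le n_0\le n$, $$\left|\frac{\log M_{n,v}}{2^n}-\frac{\log M_{n_0,v}}{2^{n_0}}\right|\le4\log 2.$$
   Context: Define $A_0=\alpha$, $B_0=1$, and for $n\ge0$, $A_{n+1}=A_n^2+\lambda B_n^2$, $B_{n+1}=A_nB_n$ (so $[A_n:B_n]$ is the $n$-th iterate of $\alpha$ under $z\mapsto(z^2+\lambda)/z$). Set $M_{n,v}=\max\{|A_n|_v,|B_n|_v\}$. *)

From mathcomp Require Import all_boot all_order all_algebra all_field.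
From mathcomp Require Import all_classical all_reals all_analysis.

Set Implicit Arguments. Unset Strict Implicit. Unset Printing Implicit Defensive.
Import Order.TTheory GRing.Theory Num.Theory.
Local Open Scope ring_scope.

Definition is_absval (R : realType) (f : algC -> R) : Prop :=
  (forall x : algC, 0 <= f x) /\
  (forall x : algC, f x = 0 <-> x = 0) /\
  (forall x y : algC, f (x * y) = f x * f y) /\
  (forall x y : algC, f (x + y) <= f x + f y).

Fixpoint AB (alpha lambda : algC) (n : nat) : algC * algC :=
  match n with
  | O => (alpha, 1)
  | S m => let p := AB alpha lambda m in
           (p.1 ^+ 2 + lambda * p.2 ^+ 2, p.1 * p.2)
  end.

Definition A_seq alpha lambda n := (AB alpha lambda n).1.
Definition B_seq alpha lambda n := (AB alpha lambda n).2.

Definition Mnv (R : realType) (v : algC -> R) alpha lambda n : R :=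
  Num.max (v (A_seq alpha lambda n)) (v (B_seq alpha lambda n)).

From mathcomp Require Import all_boot all_order all_algebra all_field.
From mathcomp Require Import all_classical all_reals all_analysis.
From mathcomp Require Import ring lra.
Set Implicit Arguments.
Unset Strict Implicit.
Unset Printing Implicit Defensive.

Import Order.TTheory GRing.Theory Num.Theory.
Local Open Scope ring_scope.

(* The heights obey M_{k+1} <= 2 M_k^2 (triangle inequality) and, more
   delicately, M_k^2 <= 2^(k+1) M_{k+1}.  For the lower bound, while
   (|alpha| - k|lambda|) |B_k| <= |A_k| the term A_k^2 dominates; once this
   fails we have k|lambda| >= 1, so 2^k |lambda| >= 1 and the lost factor
   |lambda| is paid for by 2^k.  Dividing the logarithms by 2^k, both bounds
   telescope: ln M_k / 2^k + ln 2 / 2^k decreases and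
   ln M_k / 2^k - (k+2) ln 2 / 2^k increases. *)

Section AbsoluteValue.
Variables (R : realType) (v : algC -> R).
Hypothesis hv : is_absval v.

Lemma absval_ge0 z : 0 <= v z. Proof. by case: hv. Qed.

Lemma absvalM z w : v (z * w) = v z * v w. Proof. by case: hv => _ [_ []]. Qed.

Lemma absval_triangle z w : v (z + w) <= v z + v w.
Proof. by case: hv => _ [_ [_]]. Qed.

Lemma absval1 : v 1 = 1.
Proof.
have v1_neq0 : v 1 != 0.
  by apply/eqP => /(proj1 (proj1 (proj2 hv) 1)) /eqP; rewrite oner_eq0.
by apply: (mulIf v1_neq0); rewrite mul1r -absvalM mulr1.
Qed.

Lemma absvalN z : v (- z) = v z.
Proof.
have sqN1 : v (-1) * v (-1) = 1 by rewrite -absvalM mulrNN mulr1 absval1.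
have vN1 : v (-1) = 1 by have := absval_ge0 (-1); nra.
by rewrite -mulN1r absvalM vN1 mul1r.
Qed.

Lemma absvalX z n : v (z ^+ n) = v z ^+ n.
Proof. by elim: n => [|n IH]; rewrite ?absval1 // !exprS absvalM IH. Qed.

Lemma absval_lerB z w : v z - v w <= v (z - w).
Proof. by have := absval_triangle (z - w) w; rewrite subrK lerBlDr. Qed.

Lemma absval_dist_dist z w : `|v z - v w| <= v (z - w).
Proof.
rewrite ler_norml absval_lerB andbT lerNl opprB.
by rewrite -[z - w]opprB absvalN absval_lerB.
Qed.

End AbsoluteValue.

Lemma ler_div_exp2S (R : realFieldType) (a b : R) k :
  b <= 2 * a -> b / 2 ^+ k.+1 <= a / 2 ^+ k.
Proof.
move=> le_b_2a; rewrite exprS invfM mulrA ler_wpM2r ?invr_ge0 ?exprn_ge0 //.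
by rewrite ler_pdivrMr // mulrC.
Qed.

Lemma ln_div_exp2_oscillation (R : realType) (m : nat -> R) :
  (forall k, 0 < m k) ->
  (forall k, m k.+1 <= 2 * m k ^+ 2) ->
  (forall k, m k ^+ 2 <= 2 ^+ k.+1 * m k.+1) ->
  forall n0 n, (n0 <= n)%N ->
  `| ln (m n) / 2 ^+ n - ln (m n0) / 2 ^+ n0 | <= 4 * ln (2 : R).
Proof.
move=> m_gt0 m_up m_lo n0 n le_n0n.
set L := ln (2 : R); have L_gt0 : 0 < L by rewrite ln_gt0 // ltr1n.
have ln_up k : ln (m k.+1) <= L + 2 * ln (m k).
  rewrite mulr_natl -lnXn // -lnM ?posrE ?exprn_gt0 //.
  by rewrite ler_ln ?posrE ?mulr_gt0 ?exprn_gt0.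
have ln_lo k : 2 * ln (m k) <= k.+1%:R * L + ln (m k.+1).
  rewrite !mulr_natl -!lnXn // -lnM ?posrE ?exprn_gt0 //.
  by rewrite ler_ln ?posrE ?mulr_gt0 ?exprn_gt0.
have decr : {homo (fun k => (ln (m k) + L) / 2 ^+ k) :
    i j / (i <= j)%N >-> j <= i}.
  by apply/nonincreasing_seqP => k; apply: ler_div_exp2S; have := ln_up k; lra.
have incr : {homo (fun k => (ln (m k) - k.+2%:R * L) / 2 ^+ k) :
    i j / (i <= j)%N >-> i <= j}.
  apply/nondecreasing_seqP => k; rewrite -lerN2 -!mulNr.
  by apply: ler_div_exp2S; rewrite !mulrSr; have := ln_lo k; lra.
have exp2_gt0 k : 0 < (2 : R) ^+ k by rewrite exprn_gt0.
have L_div_le : L / 2 ^+ n0 <= L.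
  by rewrite ler_pdivrMr // ler_pMr // exprn_ege1 // ler1n.
have slope_le : n0.+2%:R * L / 2 ^+ n0 <= 2 * L.
  rewrite ler_pdivrMr // mulrAC; apply: ler_wpM2r; first exact: ltW.
  by rewrite -exprS -natrX ler_nat ltn_expl.
have L_div_ge0 : 0 <= L / 2 ^+ n by rewrite divr_ge0 ?ltW.
have slope_ge0 : 0 <= n.+2%:R * L / 2 ^+ n by rewrite divr_ge0 ?mulr_ge0 ?ltW.
have decr_n : (ln (m n) + L) / 2 ^+ n <= (ln (m n0) + L) / 2 ^+ n0.
  exact: decr.
have incr_n :
  (ln (m n0) - n0.+2%:R * L) / 2 ^+ n0 <= (ln (m n) - n.+2%:R * L) / 2 ^+ n.
  exact: incr.
move: decr_n incr_n slope_le slope_ge0.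
(* abstracted, since [mulrDl] would otherwise unfold the casts [k.+2%:R] *)
set c0 : R := n0.+2%:R; set c : R := n.+2%:R; rewrite !(mulrDl, mulNr) => *.
by rewrite ler_norml; apply/andP; split; lra.
Qed.

Lemma le_half_from_inv_bound (R : realFieldType) (M l : R) :
  1 <= M -> 0 <= l -> 2 * M <= (M * l)^-1 -> l <= 1 / 2.
Proof.
move=> M_ge1 l_ge0 le_2M_inv.
have M_ge0 : 0 <= M by lra.
have Ml_gt0 : 0 < M * l.
  rewrite lt_def mulr_ge0 // andbT.
  by apply/eqP => Ml0; move: le_2M_inv; rewrite Ml0 invr0; lra.
have : 2 * M * (M * l) <= 1 by move: le_2M_inv; rewrite -div1r ler_pdivlMr.
have : l <= M * (M * l) by rewrite mulrA ler_peMl // mulr_ege1.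
lra.
Qed.

Lemma max_succ_le_sq (R : realFieldType) (x y x' l : R) :
  0 <= x -> 0 <= y -> 0 <= l -> l <= 1 -> x' <= x ^+ 2 + l * y ^+ 2 ->
  Num.max x' (x * y) <= 2 * Num.max x y ^+ 2.
Proof.
move=> x_ge0 y_ge0 l_ge0 l_le1 le_x'.
have x_le : x <= Num.max x y by rewrite le_max lexx.
have y_le : y <= Num.max x y by rewrite le_max lexx orbT.
by rewrite ge_max; apply/andP; split; nra.
Qed.

Lemma sq_max_le_succ (R : realFieldType) (x y x' l P : R) :
  0 <= x -> 0 <= y -> 0 <= l -> l <= 1 / 2 -> 1 <= P ->
  `|x ^+ 2 - l * y ^+ 2| <= x' -> (x < y -> 1 <= l * P) ->
  Num.max x y ^+ 2 <= 2 * P * Num.max x' (x * y).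
Proof.
move=> x_ge0 y_ge0 l_ge0 l_le_half P_ge1 le_x' lP_ge1.
have x'_ge0 : 0 <= x' := le_trans (normr_ge0 _) le_x'.
move: le_x'; rewrite ler_norml => /andP[lo_x' hi_x'].
set N := Num.max x' (x * y).
have x'_le : x' <= N by rewrite le_max lexx.
have xy_le : x * y <= N by rewrite le_max lexx orbT.
have N_le : N <= P * N by rewrite ler_peMl // (le_trans x'_ge0).
have [le_yx | lt_xy] := leP y x.
  have : l * y ^+ 2 <= x ^+ 2 / 2 by nra.
  lra.
have := lP_ge1 lt_xy.
(* l y^2 is bounded by 2 x y when x >= l y / 2, and by 2 x' otherwise *)
have [le_x | lt_x] := leP (l / 2 * y) x.
  have : l * y ^+ 2 <= 2 * N by nra.
  nra.
have : l * y ^+ 2 <= 2 * N by nra.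
nra.
Qed.

Lemma dominance_step (R : realFieldType) (x y x' s l : R) :
  0 <= x -> 0 <= y -> 0 <= l -> 1 <= s - l -> s * y <= x ->
  x ^+ 2 - l * y ^+ 2 <= x' -> (s - l) * (x * y) <= x'.
Proof.
move=> x_ge0 y_ge0 l_ge0 s_ge1 le_sy_x le_x'.
have : 0 <= (x - s * y) * (x + l * y) + l * (s - 1) * y ^+ 2.
  apply: addr_ge0; apply: mulr_ge0.
  - by rewrite subr_ge0.
  - by rewrite addr_ge0 ?mulr_ge0.
  - by rewrite mulr_ge0 // subr_ge0; lra.
  - exact: exprn_ge0.
have -> : (x - s * y) * (x + l * y) + l * (s - 1) * y ^+ 2
  = x ^+ 2 - l * y ^+ 2 - (s - l) * (x * y) by ring.
lra.
Qed.

Lemma A_seq_succ (alpha lambda : algC) k :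
  A_seq alpha lambda k.+1 =
  A_seq alpha lambda k ^+ 2 + lambda * B_seq alpha lambda k ^+ 2.
Proof. by []. Qed.

Lemma B_seq_succ (alpha lambda : algC) k :
  B_seq alpha lambda k.+1 = A_seq alpha lambda k * B_seq alpha lambda k.
Proof. by []. Qed.

Section Heights.
Variables (R : realType) (v : algC -> R) (alpha lambda : algC).
Hypothesis hv : is_absval v.

Local Notation vA k := (v (A_seq alpha lambda k)).
Local Notation vB k := (v (B_seq alpha lambda k)).
Local Notation l := (v lambda).

Lemma absval_B_succ k : vB k.+1 = vA k * vB k.
Proof. by rewrite B_seq_succ absvalM. Qed.

Lemma absval_A_succ_le k : vA k.+1 <= vA k ^+ 2 + l * vB k ^+ 2.
Proof. by rewrite A_seq_succ -!(absvalX hv) -(absvalM hv) absval_triangle. Qed.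

Lemma absval_A_succ_ge k : `|vA k ^+ 2 - l * vB k ^+ 2| <= vA k.+1.
Proof.
have := absval_dist_dist hv (A_seq alpha lambda k ^+ 2)
  (- (lambda * B_seq alpha lambda k ^+ 2)).
by rewrite opprK -A_seq_succ absvalN // absvalM // !(absvalX hv).
Qed.

Lemma absval_A_dominates k :
  1 <= v alpha - k%:R * l -> (v alpha - k%:R * l) * vB k <= vA k.
Proof.
elim: k => [|k IH]; first by rewrite mul0r subr0 /B_seq /= absval1 // mulr1.
have -> : v alpha - k.+1%:R * l = v alpha - k%:R * l - l.
  by rewrite -natr1 mulrDl mul1r opprD addrA.
move=> s_ge1.
rewrite absval_B_succ; apply: dominance_step; rewrite ?absval_ge0 //.
  apply: IH; have := absval_ge0 hv lambda; lra.
by have := absval_A_succ_ge k; rewrite ler_norml => /andP[_].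
Qed.

Hypothesis alpha_ge2 : 2 <= v alpha.
Hypothesis lambda_le_half : l <= 1 / 2.

Lemma exp2_lambda_ge1 k : vA k < vB k -> 1 <= l * 2 ^+ k.
Proof.
move=> lt_AB.
have l_ge0 := absval_ge0 hv lambda.
have s_lt1 : v alpha - k%:R * l < 1.
  rewrite ltNge; apply/negP => s_ge1.
  have := absval_A_dominates s_ge1.
  have := absval_ge0 hv (A_seq alpha lambda k); nra.
have kl_le : k%:R * l <= 2 ^+ k * l.
  by rewrite ler_wpM2r // -natrX ler_nat ltnW // ltn_expl.
rewrite mulrC; have := alpha_ge2; lra.
Qed.

Lemma Mnv_succ_le k : Mnv v alpha lambda k.+1 <= 2 * Mnv v alpha lambda k ^+ 2.
Proof.
rewrite /Mnv absval_B_succ; apply: (max_succ_le_sq (l := l)).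
all: rewrite ?absval_ge0 //.
- by have := lambda_le_half; lra.
- exact: absval_A_succ_le.
Qed.

Lemma Mnv_sq_le k :
  Mnv v alpha lambda k ^+ 2 <= 2 ^+ k.+1 * Mnv v alpha lambda k.+1.
Proof.
rewrite /Mnv absval_B_succ [2 ^+ k.+1]exprS; apply: (sq_max_le_succ (l := l)).
all: rewrite ?absval_ge0 //.
- by rewrite exprn_ege1 // ler1n.
- exact: absval_A_succ_ge.
- exact: exp2_lambda_ge1.
Qed.

Lemma Mnv_gt0 k : 0 < Mnv v alpha lambda k.
Proof.
elim: k => [|k IH].
  by rewrite /Mnv lt_max /B_seq /= absval1 // ltr01 orbT.
have := lt_le_trans (exprn_gt0 2 IH) (Mnv_sq_le k).
by rewrite pmulr_rgt0 // exprn_gt0.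
Qed.

End Heights.

Theorem proposition6p2 (R : realType) (M : R) (alpha lambda : algC) (v : algC -> R) :
  is_absval v -> 1 <= M ->
  (M * v lambda)^-1 <= v alpha -> 2 * M <= (M * v lambda)^-1 ->
  forall n0 n : nat, (n0 <= n)%N ->
  `| ln (Mnv v alpha lambda n) / 2 ^+ n - ln (Mnv v alpha lambda n0) / 2 ^+ n0 |
     <= 4 * ln 2.
Proof.
move=> hv M_ge1 le_inv_alpha le_2M_inv.
have lambda_le_half :=
  le_half_from_inv_bound M_ge1 (absval_ge0 hv lambda) le_2M_inv.
have alpha_ge2 : 2 <= v alpha by lra.
apply: ln_div_exp2_oscillation => k.
- exact: Mnv_gt0.
- exact: Mnv_succ_le.
- exact: Mnv_sq_le.
Qed.
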